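(* Let $\mathbf{C}$ be a category, take $\mathcal{M}=\mathrm{mono}(\mathbf{C})$ the class of all monomorphisms as stable system of monics, suppose $\mathbf{C}$ has pullbacks along monomorphisms and has a $\mathrm{mono}(\mathbf{C})$-partial map classifier. Then for every composable sequence of monomorphisms $A\xrightarrow{f}B\xrightarrow{m}C$, any final pullback complement $A\xrightarrow{n}F\xrightarrow{g}C$ of $(f,m)$ satisfies that both $n$ and $g$ are monomorphisms.
   Context: Final pullback complement (FPC) of composable $A\xrightarrow{f}B\xrightarrow{m}C$: a pair $A\xrightarrow{n}F\xrightarrow{g}C$ with $g\circ n=m\circ f$ forming a pullback square, such that for every pullback square $m\circ u=w\circ v$ ($u:X\to B$, $v:X\to Y$, $w:Y\to C$) and every $t:X\to A$ with $f\circ t=u$ there is a unique $y:Y\to F$ with $g\circ y=w$ and $y\circ v=n\circ t$. ''Has pullbacks along monomorphisms'': pullbacks of cospans $A\to B\leftarrow B'$ with $B'\to B$ monic exist. For a stable system of monics $\mathcal{M}$ (a class of monos containing isomorphisms, closed under composition and pullback), an $\mathcal{M}$-partial map classifier is a functor $T:\mathbf{C}\to\mathbf{C}$ with a natural transformation $\eta:\mathrm{Id}_{\mathbf{C}}\Rightarrow T$ such that each $\eta_X\in\mathcal{M}$ and for every span $A\xleftarrow{m}X\xrightarrow{f}B$ with $m\in\mathcal{M}$ there is a unique $\varphi:A\to T(B)$ such that $(m,f)$ is a pullback of $(\varphi,\eta_B)$. *)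

Set Implicit Arguments.
Unset Strict Implicit.

Record Category := {
  Ob :> Type;
  Hom : Ob -> Ob -> Type;
  idm : forall a, Hom a a;
  comp : forall x y z, Hom y z -> Hom x y -> Hom x z;
  comp_assoc : forall a b c' d (h : Hom c' d) (g : Hom b c') (f : Hom a b),
      comp h (comp g f) = comp (comp h g) f;
  comp_id_l : forall a b (f : Hom a b), comp (idm b) f = f;
  comp_id_r : forall a b (f : Hom a b), comp f (idm a) = f
}.

Arguments Hom {c} _ _.
Arguments idm {c} _.
Arguments comp {c x y z} _ _.

Notation "g \o' f" := (comp g f) (at level 40, left associativity).

Section Defs.
Variable C : Category.

Definition mono {a b : C} (m : Hom a b) : Prop :=
  forall x (u v : Hom x a), m \o' u = m \o' v -> u = v.

Definition is_pullback {P A B Z : C} (p1 : Hom P A) (p2 : Hom P B)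
  (f : Hom A Z) (g : Hom B Z) : Prop :=
  f \o' p1 = g \o' p2 /\
  forall X (x1 : Hom X A) (x2 : Hom X B), f \o' x1 = g \o' x2 ->
    exists! u : Hom X P, p1 \o' u = x1 /\ p2 \o' u = x2.

Definition has_pullbacks_along_monos : Prop :=
  forall (A B B' : C) (f : Hom A B) (m : Hom B' B), mono m ->
    exists (P : C) (p1 : Hom P A) (p2 : Hom P B'), is_pullback p1 p2 f m.

Definition is_mono_pmc (T0 : C -> C) (T1 : forall a b : C, Hom a b -> Hom (T0 a) (T0 b))
  (eta : forall a : C, Hom a (T0 a)) : Prop :=
  (forall a : C, T1 a a (idm a) = idm (T0 a)) /\
  (forall (a b c : C) (g : Hom b c) (f : Hom a b),
      T1 a c (g \o' f) = T1 b c g \o' T1 a b f) /\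
  (forall (a b : C) (f : Hom a b), T1 a b f \o' eta a = eta b \o' f) /\
  (forall a : C, mono (eta a)) /\
  (forall (A X B : C) (m : Hom X A) (f : Hom X B), mono m ->
     exists! phi : Hom A (T0 B), is_pullback m f phi (eta B)).

Definition has_mono_pmc : Prop :=
  exists (T0 : C -> C) (T1 : forall a b : C, Hom a b -> Hom (T0 a) (T0 b))
         (eta : forall a : C, Hom a (T0 a)), is_mono_pmc T1 eta.

Definition is_fpc {A B Zc F : C} (f : Hom A B) (m : Hom B Zc)
  (n : Hom A F) (g : Hom F Zc) : Prop :=
  is_pullback f n m g /\
  forall (X Y : C) (u : Hom X B) (v : Hom X Y) (w : Hom Y Zc),
    is_pullback u v m w ->
    forall t : Hom X A, f \o' t = u ->
      exists! y : Hom Y F, g \o' y = w /\ y \o' v = n \o' t.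

End Defs.

Arguments mono {C a b} _.
Arguments is_pullback {C P A B Z} _ _ _ _.
Arguments is_fpc {C A B Zc F} _ _ _ _.


(* Since [g n = m f] is a composite of monos, [n] is mono.  For [g]: given
   [g a = g b], pull [g a] back along [m] to a span [X <-p- P -q-> B].  Both
   [a p] and [b p] factor through the pullback square [m f = g n] via maps
   [t, t' : P -> A] with [f t = q = f t'], so [t = t'] as [f] is mono.  Then [a]
   and [b] both solve the same factorisation problem of the final pullback
   complement, whose uniqueness clause gives [a = b]. *)

Section FinalPullbackComplement.
Context {C : Category}.

Lemma mono_comp {a b c : C} (g : Hom b c) (f : Hom a b) :
  mono g -> mono f -> mono (g \o' f).
Proof.
  intros Hg Hf x u v E.
  apply Hf, Hg.
  rewrite !comp_assoc. exact E.
Qed.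

Lemma mono_of_mono_comp {a b c : C} (g : Hom b c) (f : Hom a b) :
  mono (g \o' f) -> mono f.
Proof.
  intros Hgf x u v E.
  apply Hgf.
  rewrite <- !comp_assoc, E. reflexivity.
Qed.

Lemma is_pullback_sym {P A B Z : C} {p1 : Hom P A} {p2 : Hom P B}
  {f : Hom A Z} {g : Hom B Z} :
  is_pullback p1 p2 f g -> is_pullback p2 p1 g f.
Proof.
  intros [Hsq Huniv]. split; [symmetry; exact Hsq |].
  intros X x2 x1 Hx.
  destruct (Huniv X x1 x2 (eq_sym Hx)) as [u [[Hu1 Hu2] Hun]].
  exists u. split; [split; assumption |].
  intros u' [E2 E1]. apply Hun. split; assumption.
Qed.

Section Fpc.
Context {A B Z F : C} {f : Hom A B} {m : Hom B Z} {n : Hom A F} {g : Hom F Z}.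
Hypothesis fpc : is_fpc f m n g.

Lemma fpc_mono_l : mono f -> mono m -> mono n.
Proof.
  intros Hf Hm.
  apply (mono_of_mono_comp g).
  destruct fpc as [[Hsq _] _].
  rewrite <- Hsq. apply mono_comp; assumption.
Qed.

Lemma fpc_mono_r : has_pullbacks_along_monos C -> mono f -> mono m -> mono g.
Proof.
  intros HPB Hf Hm X a b Eab.
  destruct fpc as [[_ Hfactor] Hfinal].
  destruct (HPB X Z B (g \o' a) m Hm) as [P [p [q Hpb]]].
  assert (Hpq : g \o' (a \o' p) = m \o' q).
  { rewrite comp_assoc. exact (proj1 Hpb). }
  assert (Hbpq : g \o' (b \o' p) = m \o' q).
  { rewrite comp_assoc, <- Eab. exact (proj1 Hpb). }
  destruct (Hfactor P q (a \o' p) (eq_sym Hpq)) as [t [[Hft Hnt] _]].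
  destruct (Hfactor P q (b \o' p) (eq_sym Hbpq)) as [t' [[Hft' Hnt'] _]].
  assert (Ett' : t = t') by (apply Hf; rewrite Hft, Hft'; reflexivity).
  subst t'.
  destruct (Hfinal P X q p (g \o' a) (is_pullback_sym Hpb) t Hft)
    as [y [_ Hy]].
  transitivity y; [symmetry |]; apply Hy; split; auto.
Qed.

End Fpc.
End FinalPullbackComplement.

Theorem mainTheorem11 (C : Category) :
  has_pullbacks_along_monos C -> has_mono_pmc C ->
  forall (A B Z F : C) (f : Hom A B) (m : Hom B Z) (n : Hom A F) (g : Hom F Z),
    mono f -> mono m -> is_fpc f m n g -> mono n /\ mono g.
Proof.
  intros HPB _ A B Z F f m n g Hf Hm Hfpc.
  split.
  - exact (fpc_mono_l Hfpc Hf Hm).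
  - exact (fpc_mono_r Hfpc HPB Hf Hm).
Qed.
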